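(* Let $M$ be the $3\times 2$ array of cells (3 columns, 2 rows) whose standard figure $F\subseteq[0,3]\times[0,2]\subseteq\mathbb{R}^2$ is the union of the segment from $(0,0)$ to $(1,1)$ (increasing, bottom cell of column 1), the segment from $(1,1)$ to $(2,2)$ (increasing, top cell of column 2), the segment from $(1,1)$ to $(2,0)$ (decreasing, bottom cell of column 2), and the segment from $(2,2)$ to $(3,1)$ (decreasing, top cell of column 3). Then a permutation is a simple permutation avoiding both $4231$ and $3124$ if and only if it is a simple permutation lying in $\operatorname{Geom}(M)$.
   Context: A permutation $\pi$ avoids $\sigma$ if no subsequence of $\pi$ is order-isomorphic to $\sigma$. An interval of a permutation $\pi$ is a set of contiguous positions $\{a,a+1,\dots,b\}$ whose values $\{\pi(i)\}$ also form a set of contiguous integers; intervals of size $0$, $1$ and $n$ are trivial, and $\pi$ is simple if all its intervals are trivial. For a figure $F\subseteq\mathbb{R}^2$, $\operatorname{Geom}(M)$ is the set of all permutations obtained as follows: choose finitely many points of $F$, no two on a common horizontal or vertical line, label them $1,\dots,n$ from bottom to top, and read the labels from left to right. (In matrix form, with the top row displayed first, $M=\begin{pmatrix}0&1&-1\\1&-1&0\end{pmatrix}$, where $1$ denotes an increasing diagonal segment across the cell, $-1$ a decreasing one, $0$ an empty cell.) *)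

From Stdlib Require Import Reals.
From mathcomp Require Import all_boot all_fingroup.
Set Implicit Arguments. Unset Strict Implicit. Unset Printing Implicit Defensive.

(* Positions and values of p : 'S_n are 0-indexed ordinals. *)

Definition contains_pat (n : nat) (p : 'S_n) (q : seq nat) : Prop :=
  exists f : 'I_(size q) -> 'I_n,
    (forall i j : 'I_(size q), i < j -> f i < f j) /\
    (forall i j : 'I_(size q), (nth 0 q i < nth 0 q j) = (p (f i) < p (f j))).

Definition avoids (n : nat) (p : 'S_n) (q : seq nat) : Prop := ~ contains_pat p q.

Definition is_interval (n : nat) (p : 'S_n) (a b : nat) : Prop :=
  a <= b < n /\
  exists c : nat, forall v : nat,
    (exists i : 'I_n, [/\ a <= i, i <= b & nat_of_ord (p i) = v]) <->
    (c <= v < c + (b - a + 1)).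

Definition simple_perm (n : nat) (p : 'S_n) : Prop :=
  forall a b : nat, is_interval p a b -> b - a + 1 = 1 \/ b - a + 1 = n.

Definition figF (x y : R) : Prop :=
  (Rle 0 x /\ Rle x 1 /\ y = x) \/
  (Rle 1 x /\ Rle x 2 /\ y = x) \/
  (Rle 1 x /\ Rle x 2 /\ y = Rminus 2 x) \/
  (Rle 2 x /\ Rle x 3 /\ y = Rminus 4 x).

(* p is in Geom(F): there are n points of F, indexed by left-to-right order
   (x strictly increasing), no two on a common horizontal line, such that
   labelling them by height gives p: the i-th point from the left has
   height-rank p i. *)
Definition in_Geom (F : R -> R -> Prop) (n : nat) (p : 'S_n) : Prop :=
  exists (x y : 'I_n -> R),
    (forall i, F (x i) (y i)) /\
    (forall i j : 'I_n, i < j -> Rlt (x i) (x j)) /\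
    (forall i j : 'I_n, Rlt (y i) (y j) <-> p i < p j).

From Stdlib Require Import Reals Lra Classical.
From mathcomp Require Import all_boot all_fingroup zify.
Set Implicit Arguments. Unset Strict Implicit. Unset Printing Implicit Defensive.

(* Let L be the last entry of p. Column 1 of M receives the longest prefix of
   entries below L, column 3 the longest suffix of entries at least L, and
   column 2 the rest; in every column the entries below L go to the bottom cell.
   Avoiding 4231 and 3124 together with simplicity forces each of the four cells
   to be monotone in the direction of its segment: a minimal violation always
   produces a proper interval, or two adjacent entries with consecutive values.
   Every entry is then placed on F at a distance in (0, 1) from the point (1, 1),
   chosen by a key that orders the entries below L by decreasing value, those
   at least L by increasing value, and column 2 by position.  Conversely, four
   points of F never form a 4231 or a 3124, by a case analysis on their
   segments. *)

(* [entry p i] is the value at position [i], with junk value 0 outside [0, n). *)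
Definition entry (n : nat) (p : 'S_n) (i : nat) : nat :=
  oapp (fun o : 'I_n => val (p o)) 0 (insub i).

Section PermutationValues.
Variables (n : nat) (p : 'S_n).

Lemma entryE (o : 'I_n) : entry p o = p o.
Proof. by rewrite /entry valK. Qed.

Lemma entry_lt i : i < n -> entry p i < n.
Proof. by move=> lt_in; rewrite -[i]/(val (Ordinal lt_in)) entryE. Qed.

Lemma entry_inj i j : i < n -> j < n -> entry p i = entry p j -> i = j.
Proof.
move=> lt_in lt_jn; rewrite -[i]/(val (Ordinal lt_in)) -[j]/(val (Ordinal lt_jn)).
by rewrite !entryE => /val_inj/perm_inj[].
Qed.

Lemma entry_onto v : v < n -> exists2 i, i < n & entry p i = v.
Proof.
move=> lt_vn; exists ((p^-1)%g (Ordinal lt_vn)) => //.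
by rewrite entryE permKV.
Qed.

Lemma entry_neq i j : i < n -> j < n -> i <> j -> entry p i <> entry p j.
Proof. by move=> lt_in lt_jn ne_ij /entry_inj => /(_ lt_in lt_jn). Qed.

Lemma ltn_of_entry_neq i j : i <= j -> entry p i <> entry p j -> i < j.
Proof. by rewrite leq_eqVlt => /orP[/eqP-> |]. Qed.

Lemma exists_argmin a b : a <= b -> b < n ->
  exists2 i, a <= i <= b & forall j, a <= j <= b -> entry p i <= entry p j.
Proof.
move=> le_ab lt_bn; have lt_an : a < n by lia.
case: (@arg_minnP _ (Ordinal lt_an) (fun o : 'I_n => a <= o <= b) (fun o => entry p o));
  first by rewrite /= leqnn.
move=> i range_i min_i; exists i => // j range_j.
by apply: (min_i (Ordinal (leq_ltn_trans (proj2 (andP range_j)) lt_bn))).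
Qed.

Lemma exists_argmax a b : a <= b -> b < n ->
  exists2 i, a <= i <= b & forall j, a <= j <= b -> entry p j <= entry p i.
Proof.
move=> le_ab lt_bn; have lt_an : a < n by lia.
case: (@arg_maxnP _ (Ordinal lt_an) (fun o : 'I_n => a <= o <= b) (fun o => entry p o));
  first by rewrite /= leqnn.
move=> i range_i max_i; exists i => // j range_j.
by apply: (max_i (Ordinal (leq_ltn_trans (proj2 (andP range_j)) lt_bn))).
Qed.

End PermutationValues.

Arguments entry_neq {n} p i j.
Arguments ltn_of_entry_neq {n} p {i j}.

Lemma ex_minimal (P : nat -> Prop) :
  (exists k, P k) -> exists k, P k /\ forall j, j < k -> ~ P j.
Proof.
case=> k; elim: k {-2}k (leqnn k) => [|N IH] k le_kN Pk.
  by exists k; split=> // j; lia.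
case: (classic (exists2 j, j < k & P j)) => [[j lt_jk Pj]|no_smaller].
  by apply: (IH j) => //; lia.
by exists k; split=> // j lt_jk Pj; apply: no_smaller; exists j.
Qed.

Lemma ex_maximal (P : nat -> Prop) N : (exists k, P k) -> (forall k, P k -> k <= N) ->
  exists k, P k /\ forall j, P j -> j <= k.
Proof.
move=> [k0 Pk0] bounded.
have [m [m_ub m_min]] := ex_minimal (ex_intro (fun m => forall j, P j -> j <= m) N bounded).
exists m; split=> //; apply: NNPP => notPm.
case: m m_ub m_min notPm => [|m] m_ub m_min notPm.
  have k0E : k0 = 0 by have := m_ub k0 Pk0; lia.
  by rewrite k0E in Pk0.
apply: (m_min m (ltnSn m)) => j Pj.
have := m_ub j Pj; rewrite leq_eqVlt => /orP[/eqP jE|] //.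
by move: Pj; rewrite jE.
Qed.

Lemma contains_pat4 n (p : 'S_n) (q : seq nat) a b c d :
  size q = 4 -> a < b -> b < c -> c < d -> d < n ->
  (forall i j : 'I_4, (nth 0 q i < nth 0 q j) =
     (entry p (nth 0 [:: a; b; c; d] i) < entry p (nth 0 [:: a; b; c; d] j))) ->
  contains_pat p q.
Proof.
move=> size_q lt_ab lt_bc lt_cd lt_dn same_order.
have pos_lt : forall i : 'I_4, nth 0 [:: a; b; c; d] i < n.
  by case=> [[|[|[|[|i]]]] lt_i4] //=; lia.
rewrite /contains_pat size_q.
exists (fun i : 'I_4 => Ordinal (pos_lt i)); split.
  by move=> [[|[|[|[|i]]]] ?] [[|[|[|[|j]]]] ?] //= _; lia.
by move=> i j; rewrite same_order -!entryE.
Qed.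

(** * Convex blocks of simple permutations *)

Definition convex_block n (p : 'S_n) a b : Prop :=
  forall k i1 i2, k < n -> a <= i1 <= b -> a <= i2 <= b -> ~~ (a <= k <= b) ->
    entry p i1 < entry p k -> entry p k < entry p i2 -> False.

Section Intervals.
Variables (n : nat) (p : 'S_n).

Lemma convex_block_values a b : a <= b -> b < n -> convex_block p a b ->
  exists lo hi, forall v, (exists2 k, a <= k <= b & entry p k = v) <-> lo <= v <= hi.
Proof.
move=> le_ab lt_bn convex.
have [i1 range_i1 min_i1] := exists_argmin p le_ab lt_bn.
have [i2 range_i2 max_i2] := exists_argmax p le_ab lt_bn.
exists (entry p i1), (entry p i2) => v; split=> [[k range_k <-]|/andP[ge_v le_v]].
  by rewrite min_i1 ?max_i2.
have lt_i2n : i2 < n by lia.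
have [k lt_kn kE] := entry_onto p (leq_ltn_trans le_v (entry_lt p lt_i2n)).
case range_k: (a <= k <= b); first by exists k.
have k_new : forall i, a <= i <= b -> entry p i <> v.
  move=> i range_i; rewrite -kE => /entry_inj eq_ik.
  by move: range_k; rewrite -eq_ik ?range_i //; lia.
have lt1 : entry p i1 < v by have := k_new i1 range_i1; lia.
have lt2 : v < entry p i2 by have := k_new i2 range_i2; lia.
by case: (convex k i1 i2 lt_kn range_i1 range_i2); rewrite ?range_k ?kE.
Qed.

Lemma interval_of_values a b lo hi : a <= b -> b < n ->
  (forall v, (exists2 k, a <= k <= b & entry p k = v) <-> lo <= v <= hi) ->
  is_interval p a b.
Proof.
move=> le_ab lt_bn values.
set s := map (entry p) (iota a (b - a + 1)).
have uniq_s : uniq s.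
  rewrite map_inj_in_uniq ?iota_uniq // => i j; rewrite !mem_iota => range_i range_j.
  by apply: entry_inj; lia.
have le_lohi : lo <= hi.
  have range_a : a <= a <= b by rewrite leqnn.
  by have := proj1 (values _) (ex_intro2 _ _ a range_a erefl); lia.
have s_range : s =i iota lo (hi - lo + 1).
  move=> v; rewrite mem_iota; have [to_range of_range] := values v.
  apply/mapP/idP => [[k]|range_v].
    rewrite mem_iota => range_k vE; have range_k' : a <= k <= b by lia.
    by have := to_range (ex_intro2 _ _ k range_k' (esym vE)); lia.
  have [|k range_k <-] := of_range; first lia.
  by exists k; rewrite // mem_iota; lia.
have := perm_size (uniq_perm uniq_s (iota_uniq _ _) s_range).
rewrite size_map !size_iota => sizeE.
split; first by apply/andP.
exists lo => v; split=> [[o [ge_o le_o <-]]|range_v].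
  have range_o : a <= o <= b by rewrite ge_o le_o.
  by have := proj1 (values _) (ex_intro2 _ _ (nat_of_ord o) range_o (entryE p o)); lia.
have [|k range_k kE] := proj2 (values v); first lia.
have lt_kn : k < n by lia.
by exists (Ordinal lt_kn); rewrite -kE -entryE; split=> //=; lia.
Qed.

Lemma simple_convex_block a b : simple_perm p -> convex_block p a b ->
  a < b -> b < n -> a = 0 /\ b = n.-1.
Proof.
move=> simple convex lt_ab lt_bn.
have [lo [hi values]] := convex_block_values (ltnW lt_ab) lt_bn convex.
have := simple a b (interval_of_values (ltnW lt_ab) lt_bn values); lia.
Qed.

Lemma simple_no_adjacent_consecutive a : simple_perm p -> 2 < n -> a.+1 < n ->
  entry p a.+1 = (entry p a).+1 \/ entry p a = (entry p a.+1).+1 -> False.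
Proof.
move=> simple gt2n lt_an consecutive.
suff /(simple_convex_block simple) : convex_block p a a.+1 by case=> //; lia.
move=> k i1 i2 _ range_i1 range_i2 _.
have [-> | ->] : i1 = a \/ i1 = a.+1 by lia.
all: have [-> | ->] : i2 = a \/ i2 = a.+1 by lia.
all: lia.
Qed.

End Intervals.

(** * The four cells of a simple permutation avoiding 4231 and 3124 *)

Section SimpleAvoiders.
Variables (n : nat) (p : 'S_n).
Hypotheses (p_simple : simple_perm p)
  (p_av4231 : avoids p [:: 4; 2; 3; 1]) (p_av3124 : avoids p [:: 3; 1; 2; 4]).

Local Notation pv := (entry p).
Local Notation L := (entry p n.-1).

Lemma no_4231_at a b c d : a < b -> b < c -> c < d -> d < n ->
  pv d < pv b -> pv b < pv c -> pv c < pv a -> False.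
Proof.
move=> lt_ab lt_bc lt_cd lt_dn *; apply: p_av4231.
apply: (@contains_pat4 n p _ a b c d) => //.
by move=> [[|[|[|[|i]]]] ?] [[|[|[|[|j]]]] ?] //=; lia.
Qed.

Lemma no_3124_at a b c d : a < b -> b < c -> c < d -> d < n ->
  pv b < pv c -> pv c < pv a -> pv a < pv d -> False.
Proof.
move=> lt_ab lt_bc lt_cd lt_dn *; apply: p_av3124.
apply: (@contains_pat4 n p _ a b c d) => //.
by move=> [[|[|[|[|i]]]] ?] [[|[|[|[|j]]]] ?] //=; lia.
Qed.

Lemma no_isolated_descent u : 2 < n -> u.+1 < n -> pv u.+1 < pv u ->
  (forall a c, a < c -> c <= u -> pv a < pv c) ->
  (forall k, u.+1 < k -> k < n -> pv u.+1 < pv k -> pv k < pv u -> False) -> False.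
Proof.
move=> gt2n lt_u1n descent increasing no_later.
have adjacent := simple_no_adjacent_consecutive p_simple gt2n.
have [step | gap] : pv u = (pv u.+1).+1 \/ (pv u.+1).+1 < pv u by lia.
  by apply: (adjacent u) => //; right.
(* The value just below [pv u] can only sit right before [u]. *)
have lt_un : u < n by lia.
have [k lt_kn kE] := entry_onto p (leq_ltn_trans (leq_pred _) (entry_lt p lt_un)).
have lt_ku : k < u.
  rewrite ltnNge; apply/negP => le_uk.
  have ne_ku : k <> u by move=> eq_ku; move: kE; rewrite eq_ku; lia.
  have ne_ku1 : k <> u.+1 by move=> eq_ku; move: kE; rewrite eq_ku; lia.
  by apply: (no_later k) => //; lia.
have succ_k : k.+1 = u.
  apply/eqP; rewrite eqn_leq lt_ku leqNgt; apply/negP => lt_k1u.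
  have := increasing k k.+1 (ltnSn k) (ltnW lt_k1u).
  by have := increasing k.+1 u lt_k1u (leqnn u); lia.
apply: (adjacent k); first lia.
by rewrite succ_k; left; lia.
Qed.

Lemma bottom_prefix_increasing j : j < n -> (forall k, k <= j -> pv k < L) ->
  forall i, i < j -> pv i < pv j.
Proof.
elim/ltn_ind: j => j IH lt_jn below i lt_ij.
case: (ltngtP (pv i) (pv j)) => [// | descent | /entry_inj]; last lia.
have lt_jL : j < n.-1 by apply: (ltn_of_entry_neq p) => //; have := below j (leqnn j); lia.
have increasing : forall a c, a < c -> c <= j.-1 -> pv a < pv c.
  by move=> a c lt_ac le_c; apply: IH => //; [lia | lia | move=> k le_k; apply: below; lia].
have succ_pred : j.-1.+1 = j by lia.
exfalso; apply: (@no_isolated_descent j.-1); rewrite ?succ_pred //.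
- lia.
- have [<- // | lt_i] : i = j.-1 \/ i < j.-1 by lia.
  by have := increasing i j.-1 lt_i (leqnn _); lia.
- move=> k lt_jk lt_kn lt1 lt2.
  have below_u := below j.-1 (leq_pred j).
  have lt_kL : k < n.-1 by apply: (ltn_of_entry_neq p) => //; lia.
  by apply: (@no_3124_at j.-1 j k n.-1); lia.
Qed.

Lemma bottom_ascent_block t0 i0 j0 :
  (forall k, k < t0 -> pv k < L) -> L <= pv t0 -> t0 < i0 -> i0 < j0 -> j0 < n ->
  pv i0 < pv j0 -> pv j0 < L ->
  (forall i k, t0 < i -> i < k -> k < j0 -> pv i < L -> pv k < L -> pv k < pv i) ->
  convex_block p j0 n.-1.
Proof.
move=> first_top top_t0 lt_t0i0 lt_i0j0 lt_j0n ascent bottom_j0 no_earlier_ascent.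
have lt_Lt0 : L < pv t0 by have := entry_neq p t0 n.-1; lia.
have tail_between : forall k, j0 < k -> k < n -> pv i0 < pv k < pv t0.
  move=> k lt_j0k lt_kn; case: (ltngtP k n.-1) => [lt_kL | | ->]; [ | lia | lia].
  have := entry_neq p k i0; have := entry_neq p k t0.
  case: (ltngtP (pv k) (pv i0)) => [lt_k_i0 | | ]; last lia.
    by case: (@no_4231_at t0 i0 j0 k); lia.
  case: (ltngtP (pv k) (pv t0)) => [| gt_k_t0 | ]; [lia | | lia].
  by case: (@no_3124_at t0 i0 j0 k); lia.
move=> k i1 i2 lt_kn range_i1 range_i2 outside lt1 lt2.
have lt_kj0 : k < j0 by lia.
have lt_i0i1 : pv i0 < pv i1.
  have [-> // | lt_j0i1] : i1 = j0 \/ j0 < i1 by lia.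
  by have := tail_between i1 lt_j0i1 (ltac:(lia)); lia.
have lt_i2t0 : pv i2 < pv t0.
  have [-> | lt_j0i2] : i2 = j0 \/ j0 < i2 by lia.
    lia.
  by have := tail_between i2 lt_j0i2 (ltac:(lia)); lia.
case: (ltnP (pv k) L) => [bottom_k | top_k].
- have lt_i1L : i1 < n.-1 by apply: (ltn_of_entry_neq p); lia.
  case: (ltngtP k i0) => [lt_ki0 | gt_ki0 | kE]; last by subst k; lia.
    by apply: (@no_3124_at k i0 i1 n.-1); lia.
  by have := no_earlier_ascent i0 k; lia.
- have lt_Lk : L < pv k by have := entry_neq p k n.-1; lia.
  have lt_i2L : i2 < n.-1 by apply: (ltn_of_entry_neq p); lia.
  have lt_t0k : t0 < k.
    case: (ltngtP t0 k) => [// | lt_kt0 | kE]; last by subst k; lia.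
    by have := first_top k lt_kt0; lia.
  by apply: (@no_4231_at t0 k i2 n.-1); lia.
Qed.

Lemma bottom_after_top_decreasing j : j < n -> forall t i, t < i -> i < j ->
  L <= pv t -> pv i < L -> pv j < L -> pv j < pv i.
Proof.
elim/ltn_ind: j => j IH lt_jn t i lt_ti lt_ij top_t bottom_i bottom_j.
case: (ltngtP (pv j) (pv i)) => [// | ascent | /entry_inj]; last lia.
have [t0 [top_t0 first_top]] := ex_minimal (ex_intro (fun t => L <= pv t) t top_t).
have le_t0t : t0 <= t by rewrite leqNgt; apply/negP => /first_top.
have lt_jL : j < n.-1 by apply: (ltn_of_entry_neq p); lia.
have /(simple_convex_block p_simple) : convex_block p j n.-1.
  apply: (@bottom_ascent_block t0 i) => //; try lia.
    by move=> k lt_kt0; have := first_top k lt_kt0; lia.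
  by move=> a c *; apply: (IH c _ _ t0); lia.
by case=> //; lia.
Qed.

Lemma top_descent_block i j b : j < b -> b < n -> pv b < L -> L <= pv j ->
  i < j -> pv j < pv i ->
  (forall a c, a < c -> c < j -> L <= pv a -> L <= pv c -> pv a < pv c) ->
  exists2 k1, k1 < j & convex_block p k1 j.
Proof.
move=> lt_jb lt_bn bottom_b top_j lt_ij descent no_earlier_descent.
have lt_Lj : L < pv j by have := entry_neq p j n.-1; lia.
have [m range_m max_m] := @exists_argmax _ p 0 j.-1 (leq0n _) (ltac:(lia)).
have lt_jm : pv j < pv m by have := max_m i; lia.
have no_gap_after : forall k, j < k -> k < n -> pv j < pv k -> pv k < pv m -> False.
  move=> k lt_jk lt_kn lt1 lt2.
  have lt_kL : k < n.-1 by apply: (ltn_of_entry_neq p); lia.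
  by apply: (@no_4231_at m j k n.-1); lia.
have lt_mn : pv m < n by apply: entry_lt; lia.
(* The entry just above [pv j] starts the block. *)
have [k1 lt_k1n k1E] := @entry_onto _ p (pv j).+1 (leq_ltn_trans lt_jm lt_mn).
have lt_k1j : k1 < j.
  rewrite ltnNge; apply/negP => le_jk1.
  have ne_jk1 : j <> k1 by move=> eq_jk1; move: k1E; rewrite -eq_jk1; lia.
  case: (ltngtP (pv k1) (pv m)) => [lt_k1m | | eq_k1m]; [ | lia | ].
    by apply: (no_gap_after k1); lia.
  by have := entry_neq p k1 m; lia.
exists k1 => //.
have above_k1 : forall c, k1 < c -> c < j -> pv k1 < pv c.
  move=> c lt_k1c lt_cj; case: (leqP L (pv c)) => [top_c | bottom_c].
    by apply: no_earlier_descent; lia.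
  have lt_cb : c < b by lia.
  have := bottom_after_top_decreasing lt_bn lt_k1c lt_cb (ltac:(lia)) bottom_c bottom_b.
  by move=> lt_bc; case: (@no_4231_at k1 c j b); lia.
move=> k i1 i2 lt_kn range_i1 range_i2 outside lt1 lt2.
have ge_i1 : pv j <= pv i1.
  case: (ltngtP i1 k1) => [| gt_i1k1 | ->]; [lia | | lia].
  case: (ltngtP i1 j) => [lt_i1j | | ->]; [ | lia | lia].
  by have := above_k1 i1 gt_i1k1 lt_i1j; lia.
have le_i2 : pv i2 <= pv m.
  by case: (ltngtP i2 j) => [lt_i2j | | ->]; [apply: max_m; lia | lia | lia].
have gt_k : (pv j).+1 < pv k by have := entry_neq p k k1; lia.
case: (ltnP k k1) => [lt_kk1 | ge_kk1].
  by have := no_earlier_descent k k1 lt_kk1 lt_k1j; lia.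
by apply: (no_gap_after k); lia.
Qed.

Lemma top_before_bottom_increasing j : j < n -> forall i b, i < j -> j < b -> b < n ->
  L <= pv i -> L <= pv j -> pv b < L -> pv i < pv j.
Proof.
elim/ltn_ind: j => j IH lt_jn i b lt_ij lt_jb lt_bn top_i top_j bottom_b.
case: (ltngtP (pv i) (pv j)) => [// | descent | /entry_inj]; last lia.
have [|k1 lt_k1j /(simple_convex_block p_simple)] :=
    top_descent_block lt_jb lt_bn bottom_b top_j lt_ij descent.
  by move=> a c lt_ac lt_cj top_a top_c; apply: (IH c _ _ a b); lia.
by case=> //; lia.
Qed.

Lemma top_ascent_block s a0 J :
  (forall k, s <= k -> k < n -> L <= pv k) -> (0 < s -> pv s.-1 < L) ->
  s <= a0 -> a0 < J -> J < n -> pv a0 < pv J ->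
  (forall y z, J < y -> y < n -> s <= z <= J -> pv y < pv z) ->
  convex_block p s J.
Proof.
move=> top_suffix bottom_before le_sa0 lt_a0J lt_Jn ascent tail_below.
have lt_La0 : L < pv a0 by have := top_suffix a0; have := entry_neq p a0 n.-1; lia.
have lt_JL : J < n.-1 by apply: (ltn_of_entry_neq p); lia.
move=> k i1 i2 lt_kn range_i1 range_i2 outside lt1 lt2.
case: (ltnP J k) => [lt_Jk | le_kJ].
  by have := tail_below k i1 lt_Jk lt_kn range_i1; lia.
have lt_ks : k < s by lia.
have bottom_s1 := bottom_before (leq_ltn_trans (leq0n k) lt_ks).
have top_i1 := top_suffix i1 (ltac:(lia)) (ltac:(lia)).
have lt_ks1 : k < s.-1 by apply: (ltn_of_entry_neq p); lia.
case: (ltngtP (pv k) (pv a0)) => [lt_ka0 | gt_ka0 | ]; last by have := entry_neq p k a0; lia.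
  have lt_i1J : i1 < J by apply: (ltn_of_entry_neq p); lia.
  by apply: (@no_3124_at k s.-1 i1 J); lia.
case: (ltngtP (pv k) (pv J)) => [lt_kJ | gt_kJ | ]; last by have := entry_neq p k J; lia.
  by apply: (@no_3124_at k s.-1 a0 J); lia.
case: (ltngtP a0 i2) => [lt_a0i2 | gt_a0i2 | a0E]; last by move: lt2; rewrite -a0E; lia.
  by apply: (@no_3124_at k s.-1 a0 i2); lia.
by apply: (@no_4231_at i2 a0 J n.-1); lia.
Qed.

Lemma top_suffix_decreasing i : (forall k, i <= k -> k < n -> L <= pv k) ->
  forall j, i < j -> j < n -> pv j < pv i.
Proof.
move=> top_from_i j lt_ij lt_jn.
case: (ltngtP (pv j) (pv i)) => [// | ascent | /entry_inj]; last lia.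
pose top_from s := forall k, s <= k -> k < n -> L <= pv k.
have [s [top_from_s minimal_s]] := ex_minimal (ex_intro top_from i top_from_i).
have le_si : s <= i by rewrite leqNgt; apply/negP => /minimal_s.
have bottom_before : 0 < s -> pv s.-1 < L.
  move=> pos_s; rewrite ltnNge; apply/negP => top_s1; apply: (minimal_s s.-1); first lia.
  move=> k ge_k lt_kn; case: (ltngtP k s.-1) => [| gt_k | ->] //; first lia.
  by apply: top_from_s; lia.
pose ascent_end J := exists2 a, s <= a < J & J < n /\ pv a < pv J.
have [J [[a0 range_a0 [lt_Jn ascent0]] maximal_J]] :
    exists J, ascent_end J /\ forall J', ascent_end J' -> J' <= J.
  apply: (ex_maximal (N := n)); first by exists j, i; rewrite ?le_si.
  by move=> J [a _ [/ltnW]].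
have tail_below : forall y z, J < y -> y < n -> s <= z <= J -> pv y < pv z.
  move=> y z lt_Jy lt_yn range_z.
  case: (ltngtP (pv y) (pv z)) => [// | lt_zy | ]; last by have := entry_neq p y z; lia.
  have range_zy : s <= z < y by lia.
  by have := maximal_J y (ex_intro2 _ _ z range_zy (conj lt_yn lt_zy)); lia.
have lt_JL : J < n.-1.
  by apply: (ltn_of_entry_neq p) => //; have := top_from_s a0; lia.
have le_sa0 : s <= a0 by lia.
have lt_a0J : a0 < J by lia.
have := top_ascent_block top_from_s bottom_before le_sa0 lt_a0J lt_Jn ascent0 tail_below.
by move=> /(simple_convex_block p_simple); lia.
Qed.

(** * Placing the entries on F *)

(* Columns 1 and 3 of M; column 2 consists of the remaining positions. *)
Definition in_col1 i := all (fun k => pv k < L) (iota 0 i.+1).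
Definition in_col3 i := all (fun k => L <= pv k) (iota i (n - i)).

Lemma in_col1P i : reflect (forall k, k <= i -> pv k < L) (in_col1 i).
Proof.
apply: (iffP allP) => [below k le_ki | below k].
  by apply: below; rewrite mem_iota; lia.
by rewrite mem_iota => range_k; apply: below; lia.
Qed.

Lemma in_col3P i : reflect (forall k, i <= k -> k < n -> L <= pv k) (in_col3 i).
Proof.
apply: (iffP allP) => [above k le_ik lt_kn | above k].
  by apply: above; rewrite mem_iota; lia.
by rewrite mem_iota => range_k; apply: above; lia.
Qed.

Lemma in_col1Pn i : ~~ in_col1 i -> exists2 k, k <= i & L <= pv k.
Proof. by case/allPn=> k; rewrite mem_iota -leqNgt => range_k; exists k => //; lia. Qed.

Lemma in_col3Pn i : ~~ in_col3 i -> exists2 k, i <= k < n & pv k < L.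
Proof. by case/allPn=> k; rewrite mem_iota -ltnNge => range_k; exists k => //; lia. Qed.

Lemma in_col1_bottom i : in_col1 i -> pv i < L.
Proof. by move/in_col1P; apply. Qed.

Lemma in_col3_top i : i < n -> in_col3 i -> L <= pv i.
Proof. by move=> lt_in /in_col3P; apply. Qed.

Lemma in_col1_prefix i j : i <= j -> in_col1 j -> in_col1 i.
Proof. by move=> le_ij /in_col1P below; apply/in_col1P => k le_ki; apply: below; lia. Qed.

Lemma in_col3_suffix i j : i <= j -> in_col3 i -> in_col3 j.
Proof. by move=> le_ij /in_col3P above; apply/in_col3P => k le_jk; apply: above; lia. Qed.

Definition last_col2_bottom_above i :=
  \max_(k < n | ~~ in_col1 k && (pv k < L) && (pv i < pv k)) k.+1.
Definition last_col2_top_below i :=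
  \max_(k < n | ~~ in_col3 k && (L <= pv k) && (pv k < pv i)) k.+1.

(* The lexicographic key [(major, minor)] encoded as [major * (n + 2) + minor]:
   column-2 entries come in order of position, and an entry of column 1
   (resp. 3) comes right after the last column-2 entry it must follow, namely
   the last bottom one above it (resp. top one below it); ties are broken by
   value. *)
Definition depth_key i :=
  if in_col1 i then last_col2_bottom_above i * n.+2 + (n - pv i)
  else if in_col3 i then last_col2_top_below i * n.+2 + (pv i).+1
  else i.+1 * n.+2.

Lemma depth_key_bound i : i < n -> depth_key i < n.+2 * n.+2 - 1.
Proof.
move=> lt_in; have := entry_lt p lt_in.
have : last_col2_bottom_above i <= n by apply/bigmax_leqP => k _; exact: ltn_ord.
have : last_col2_top_below i <= n by apply/bigmax_leqP => k _; exact: ltn_ord.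
rewrite /depth_key; case: in_col1; last case: in_col3; nia.
Qed.

Lemma col2_bottom_decreasing u v : v < n -> ~~ in_col1 u ->
  pv u < L -> pv v < L -> pv u < pv v -> v < u.
Proof.
move=> lt_vn /in_col1Pn[t le_tu top_t] bottom_u bottom_v lt_uv.
case: (ltngtP u v) => [lt_uv' | // | uE]; last by move: lt_uv; rewrite uE ltnn.
have lt_tu : t < u by apply: (ltn_of_entry_neq p); lia.
have := bottom_after_top_decreasing lt_vn lt_tu lt_uv'; lia.
Qed.

Lemma col2_top_increasing u v : u < n -> ~~ in_col3 u ->
  L <= pv u -> L <= pv v -> pv u < pv v -> u < v.
Proof.
move=> lt_un /in_col3Pn[b range_b bottom_b] top_u top_v lt_uv.
case: (ltngtP u v) => [// | lt_vu | uE]; last by move: lt_uv; rewrite uE ltnn.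
have lt_ub : u < b by apply: (ltn_of_entry_neq p); lia.
have := top_before_bottom_increasing lt_un lt_vu lt_ub; lia.
Qed.

Lemma depth_key_top u v : u < n -> v < n ->
  L <= pv u -> L <= pv v -> pv u < pv v -> depth_key u < depth_key v.
Proof.
move=> lt_un lt_vn top_u top_v lt_uv.
have not_col1 : forall w, L <= pv w -> in_col1 w = false.
  by move=> w top_w; apply/negbTE/negP => /in_col1_bottom; lia.
have := entry_lt p lt_un; have := entry_lt p lt_vn.
rewrite /depth_key !not_col1 //; case col3_u: (in_col3 u); case col3_v: (in_col3 v).
- suff : last_col2_top_below u <= last_col2_top_below v by nia.
  apply/bigmax_leqP => k /andP[/andP[col2_k top_k] lt_ku].
  by apply: (leq_bigmax_cond (F := fun k : 'I_n => k.+1)); rewrite col2_k top_k /=; lia.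
- suff : last_col2_top_below u <= v by nia.
  apply/bigmax_leqP => k /andP[/andP[col2_k top_k] lt_ku].
  by apply: (col2_top_increasing (ltn_ord k)) => //; lia.
- suff : u.+1 <= last_col2_top_below v by nia.
  apply: (leq_bigmax_cond (F := fun k : 'I_n => k.+1) (Ordinal lt_un)).
  by rewrite /= col3_u top_u lt_uv.
- by have := col2_top_increasing lt_un (negbT col3_u) top_u top_v lt_uv; nia.
Qed.

Lemma depth_key_bottom u v : u < n -> v < n ->
  pv u < L -> pv v < L -> pv u < pv v -> depth_key v < depth_key u.
Proof.
move=> lt_un lt_vn bottom_u bottom_v lt_uv.
have not_col3 : forall w, w < n -> pv w < L -> in_col3 w = false.
  by move=> w lt_wn bottom_w; apply/negbTE/negP => /(in_col3_top lt_wn); lia.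
have := entry_lt p lt_un; have := entry_lt p lt_vn.
rewrite /depth_key !not_col3 //; case col1_u: (in_col1 u); case col1_v: (in_col1 v).
- suff : last_col2_bottom_above v <= last_col2_bottom_above u by nia.
  apply/bigmax_leqP => k /andP[/andP[col2_k bottom_k] lt_vk].
  by apply: (leq_bigmax_cond (F := fun k : 'I_n => k.+1)); rewrite col2_k bottom_k /=; lia.
- suff : v.+1 <= last_col2_bottom_above u by nia.
  apply: (leq_bigmax_cond (F := fun k : 'I_n => k.+1) (Ordinal lt_vn)).
  by rewrite /= col1_v bottom_v lt_uv.
- suff : last_col2_bottom_above v <= u by nia.
  apply/bigmax_leqP => k /andP[/andP[col2_k bottom_k] lt_vk].
  by apply: (col2_bottom_decreasing (ltn_ord k) (negbT col1_u)) => //; lia.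
- by have := col2_bottom_decreasing lt_vn (negbT col1_u) bottom_u bottom_v lt_uv; nia.
Qed.

Local Open Scope R_scope.

(* Entry [i] is placed on F at distance [depth i] from the point (1, 1). *)
Definition depth (i : nat) : R := INR (depth_key i).+1 / INR (n.+2 * n.+2).

Lemma depth_scale_pos : 0 < / INR (n.+2 * n.+2).
Proof. by apply: Rinv_0_lt_compat; apply: lt_0_INR; apply/ltP; lia. Qed.

Lemma depth_bounds i : (i < n)%N -> 0 < depth i < 1.
Proof.
move=> lt_in; have := depth_key_bound lt_in => bound.
have := depth_scale_pos; rewrite /depth /Rdiv => scale_pos; split.
  by apply: Rmult_lt_0_compat => //; apply: lt_0_INR; apply/ltP.
rewrite -(Rinv_r (INR (n.+2 * n.+2))); last by apply: not_0_INR; lia.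
by apply: Rmult_lt_compat_r => //; apply: lt_INR; apply/ltP; lia.
Qed.

Lemma depth_lt i j : (depth_key i < depth_key j)%N -> depth i < depth j.
Proof.
by move=> lt_key; apply: Rmult_lt_compat_r; [exact: depth_scale_pos | apply: lt_INR; apply/ltP].
Qed.

Definition xcoord (o : 'I_n) : R :=
  if in_col1 o then 1 - depth o else if in_col3 o then 3 - depth o else 1 + depth o.

Definition ycoord (o : 'I_n) : R := if (pv o < L)%N then 1 - depth o else 1 + depth o.

Lemma on_figF o : figF (xcoord o) (ycoord o).
Proof.
have bounds := depth_bounds (ltn_ord o); rewrite /xcoord /ycoord /figF.
case col1_o: (in_col1 o); first by rewrite in_col1_bottom //; left; lra.
case col3_o: (in_col3 o).
  by rewrite ltnNge in_col3_top //=; right; right; right; lra.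
by case: ltnP => _; [right; right; left | right; left]; lra.
Qed.

Lemma xcoord_increasing (i j : 'I_n) : (i < j)%N -> xcoord i < xcoord j.
Proof.
move=> lt_ij; have := depth_bounds (ltn_ord i); have := depth_bounds (ltn_ord j).
rewrite /xcoord; case col1_j: (in_col1 j).
  rewrite (in_col1_prefix (ltnW lt_ij) col1_j).
  have lt_ij' : (pv i < pv j)%N.
    by apply: bottom_prefix_increasing => //; apply/in_col1P.
  have col1_i := in_col1_prefix (ltnW lt_ij) col1_j.
  have /depth_lt := depth_key_bottom (ltn_ord i) (ltn_ord j)
    (in_col1_bottom col1_i) (in_col1_bottom col1_j) lt_ij'.
  lra.
case col1_i: (in_col1 i); first by case: (in_col3 j); lra.
case col3_i: (in_col3 i).
  rewrite (in_col3_suffix (ltnW lt_ij) col3_i).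
  have lt_ji : (pv j < pv i)%N.
    by apply: top_suffix_decreasing => //; apply/in_col3P.
  have col3_j := in_col3_suffix (ltnW lt_ij) col3_i.
  have /depth_lt := depth_key_top (ltn_ord j) (ltn_ord i)
    (in_col3_top (ltn_ord j) col3_j) (in_col3_top (ltn_ord i) col3_i) lt_ji.
  lra.
case col3_j: (in_col3 j); first lra.
have : (depth_key i < depth_key j)%N by rewrite /depth_key col1_i col1_j col3_i col3_j; nia.
move/depth_lt; lra.
Qed.

Lemma ycoord_lt_of_entry_lt (i j : 'I_n) : (pv i < pv j)%N -> ycoord i < ycoord j.
Proof.
move=> lt_ij; have := depth_bounds (ltn_ord i); have := depth_bounds (ltn_ord j).
rewrite /ycoord; case: (ltnP (pv i) L) => [bottom_i | top_i];
  case: (ltnP (pv j) L) => [bottom_j | top_j]; [ | lra | lia | ].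
  have /depth_lt := depth_key_bottom (ltn_ord i) (ltn_ord j) bottom_i bottom_j lt_ij.
  lra.
have /depth_lt := depth_key_top (ltn_ord i) (ltn_ord j) top_i top_j lt_ij.
lra.
Qed.

Lemma ycoord_lt (i j : 'I_n) : ycoord i < ycoord j <-> (p i < p j)%N.
Proof.
rewrite -!entryE; split; last exact: ycoord_lt_of_entry_lt.
case: (ltngtP (pv i) (pv j)) => [// | /ycoord_lt_of_entry_lt | /entry_inj eq_ij]; first lra.
by rewrite (val_inj (eq_ij (ltn_ord i) (ltn_ord j))); lra.
Qed.

Lemma in_Geom_figF : in_Geom figF p.
Proof.
exists xcoord, ycoord; split; first exact: on_figF.
by split; [exact: xcoord_increasing | exact: ycoord_lt].
Qed.

End SimpleAvoiders.

(** * Points of F contain no 4231 and no 3124 *)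

Lemma in_Geom_contains_pat (F : R -> R -> Prop) n (p : 'S_n) (q : seq nat) :
  in_Geom F p -> contains_pat p q ->
  exists x y : 'I_(size q) -> R, [/\ forall i, F (x i) (y i),
    forall i j : 'I_(size q), i < j -> Rlt (x i) (x j) &
    forall i j : 'I_(size q), nth 0 q i < nth 0 q j -> Rlt (y i) (y j)].
Proof.
move=> [x [y [onF [x_incr y_order]]]] [f [f_incr f_order]].
exists (x \o f), (y \o f); split=> [i | i j /f_incr | i j]; first exact: onF.
  exact: x_incr.
by rewrite f_order -y_order.
Qed.

Section FigureAvoidance.
Local Open Scope R_scope.

Lemma figF_no_4231 xa xb xc xd ya yb yc yd :
  figF xa ya -> figF xb yb -> figF xc yc -> figF xd yd ->
  xa < xb -> xb < xc -> xc < xd -> yd < yb -> yb < yc -> yc < ya -> False.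
Proof.
move=> Fa Fb Fc Fd *.
case: Fa => [|[|[|]]] Fa; case: Fb => [|[|[|]]] Fb;
case: Fc => [|[|[|]]] Fc; case: Fd => [|[|[|]]] Fd; lra.
Qed.

Lemma figF_no_3124 xa xb xc xd ya yb yc yd :
  figF xa ya -> figF xb yb -> figF xc yc -> figF xd yd ->
  xa < xb -> xb < xc -> xc < xd -> yb < yc -> yc < ya -> ya < yd -> False.
Proof.
move=> Fa Fb Fc Fd *.
case: Fa => [|[|[|]]] Fa; case: Fb => [|[|[|]]] Fb;
case: Fc => [|[|[|]]] Fc; case: Fd => [|[|[|]]] Fd; lra.
Qed.

End FigureAvoidance.

Lemma in_Geom_figF_avoids n (p : 'S_n) : in_Geom figF p ->
  avoids p [:: 4; 2; 3; 1] /\ avoids p [:: 3; 1; 2; 4].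
Proof.
move=> geom; pose o k (lt_k4 : k < 4) : 'I_4 := Ordinal lt_k4.
split=> /(in_Geom_contains_pat geom) [x [y [onF x_incr y_order]]].
  apply: (figF_no_4231 (onF (o 0 isT)) (onF (o 1 isT)) (onF (o 2 isT)) (onF (o 3 isT)));
  by [apply: x_incr | apply: y_order].
apply: (figF_no_3124 (onF (o 0 isT)) (onF (o 1 isT)) (onF (o 2 isT)) (onF (o 3 isT)));
by [apply: x_incr | apply: y_order].
Qed.

Theorem proposition5p1 (n : nat) (p : 'S_n) :
  (simple_perm p /\ avoids p [:: 4; 2; 3; 1] /\ avoids p [:: 3; 1; 2; 4]) <->
  (simple_perm p /\ in_Geom figF p).
Proof.
split=> [[simple [av4231 av3124]] | [simple geom]]; split=> //.
  exact: in_Geom_figF.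
exact: in_Geom_figF_avoids.
Qed.
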